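(* Let $u_1>0$, $u_2>0$ with $U:=u_1+u_2<1$, let $0<q<1$, and let $n\in\mathbf N$. Let $(\Omega_n,p)$ be the probability space described in the context, and for $i_0,i_1,i_2\in\mathbf N_0$ with $i_0+i_1+i_2=n$ let $A(n;i_0,i_1,i_2)\subset\Omega_n$ be the set of sequences in which the symbols $0,1,2$ occur exactly $i_0,i_1,i_2$ times respectively. Then $$P\big(A(n;i_0,i_1,i_2)\big)=\sum_{\omega\in A(n;i_0,i_1,i_2)}p(\omega)=u_1^{i_1}u_2^{i_2}(U;q)_{i_0}\begin{bmatrix}n\\ i_0,i_1,i_2\end{bmatrix}_q .$$
   Context: For $j\in\mathbf N$, $(x;q)_j=(1-x)(1-qx)\cdots(1-q^{j-1}x)$, $(x;q)_0=1$, $(q)_j=(q;q)_j$, and for $i_0+i_1+i_2=n$ the $q$-polynomial coefficient is $\begin{bmatrix}n\\ i_0,i_1,i_2\end{bmatrix}_q=\frac{(q)_n}{(q)_{i_0}(q)_{i_1}(q)_{i_2}}$. The sample space $\Omega_n$ consists of all sequences $(\varepsilon_1,\dots,\varepsilon_n)$ with $\varepsilon_j\in\{0,1,2,\ast\}$ such that if $\varepsilon_k=\ast$ then $\varepsilon_l=\ast$ for all $l>k$. Put $p((\varepsilon_1,\dots,\varepsilon_n))=f_1\cdots f_n$ where $f_1=1-U,u_1,u_2,0$ according as $\varepsilon_1=0,1,2,\ast$; for $1\le m\le n-1$, if $\varepsilon_m=\ast$ then $f_{m+1}=1$, and if $\varepsilon_1,\dots,\varepsilon_m\in\{0,1,2\}$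 contain $i_0$ zeros, $i_1$ ones and $i_2$ twos, then $f_{m+1}=1-q^{i_0}U$, $q^{i_0}u_1$, $q^{i_0+i_1}u_2$, $q^{i_0}u_2(1-q^{i_1})$ according as $\varepsilon_{m+1}=0,1,2,\ast$. *)

From HB Require Import structures.
From mathcomp Require Import all_boot all_order all_algebra.
Set Implicit Arguments. Unset Strict Implicit. Unset Printing Implicit Defensive.
Import Order.TTheory GRing.Theory Num.Theory.
Local Open Scope ring_scope.

Inductive sym := S0 | S1 | S2 | Sstar.

Definition sym_to (s : sym) : 'I_4 :=
  match s with S0 => inord 0 | S1 => inord 1 | S2 => inord 2 | Sstar => inord 3 end.
Definition sym_of (i : 'I_4) : option sym :=
  match val i with 0%N => Some S0 | 1%N => Some S1 | 2%N => Some S2 | _ => Some Sstar end.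
Lemma sym_toK : pcancel sym_to sym_of.
Proof. by case; rewrite /sym_of /= inordK. Qed.
HB.instance Definition _ := Finite.copy sym (pcan_type sym_toK).

Definition qpoch {R : comRingType} (x q : R) (j : nat) : R :=
  \prod_(k < j) (1 - q ^+ k * x).

Definition qmultinom {R : fieldType} (q : R) (n i0 i1 i2 : nat) : R :=
  qpoch q q n / (qpoch q q i0 * qpoch q q i1 * qpoch q q i2).

Definition inOmega (n : nat) (w : n.-tuple sym) : bool :=
  [forall k : 'I_n, forall l : 'I_n,
     ((tnth w k == Sstar) && (k < l)%N) ==> (tnth w l == Sstar)].

(* factor f_{m+1} given the prefix (eps_1,...,eps_m) and eps_{m+1} = e *)
Definition fstep {R : ringType} (u1 u2 q : R) (prefix : seq sym) (e : sym) : R :=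
  if (prefix != [::]) && (last S0 prefix == Sstar) then 1 else
  let i0 := count (pred1 S0) prefix in
  let i1 := count (pred1 S1) prefix in
  match e with
  | S0 => 1 - q ^+ i0 * (u1 + u2)
  | S1 => q ^+ i0 * u1
  | S2 => q ^+ (i0 + i1) * u2
  | Sstar => q ^+ i0 * u2 * (1 - q ^+ i1)
  end.

Definition pw {R : ringType} (u1 u2 q : R) (n : nat) (w : n.-tuple sym) : R :=
  \prod_(m < n) fstep u1 u2 q (take m w) (tnth w m).

Definition inA (n i0 i1 i2 : nat) (w : n.-tuple sym) : bool :=
  [&& inOmega w, count (pred1 S0) w == i0, count (pred1 S1) w == i1
    & count (pred1 S2) w == i2].

(* Counting letters shows that a word of A(n;i0,i1,i2) contains no *, so along
   such a word the factor f_(m+1) depends only on the numbers of 0s and 1s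
   before position m+1.  Splitting off the last letter then expresses
   P(A(n+1;i0,i1,i2)) through the three sets A(n;i0-1,i1,i2), A(n;i0,i1-1,i2),
   A(n;i0,i1,i2-1) with weights 1-q^(i0-1)U, q^i0 u1 and q^(i0+i1) u2, and the
   closed form obeys the same recursion by the q-Pascal rule for q-trinomials,
   which after clearing denominators is the telescoping identity
   (1-q^i0) + q^i0 (1-q^i1) + q^(i0+i1) (1-q^i2) = 1-q^(n+1). *)

From mathcomp Require Import all_boot all_order all_algebra.
From mathcomp Require Import ring zify.
Import Order.TTheory GRing.Theory Num.Theory.
Set Implicit Arguments. Unset Strict Implicit. Unset Printing Implicit Defensive.
Local Open Scope ring_scope.

Definition sym_code (x : sym) : nat :=
  match x with S0 => 0 | S1 => 1 | S2 => 2 | Sstar => 3 end.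

Lemma sym_eqE (x y : sym) : (x == y) = (sym_code x == sym_code y)%N.
Proof. by apply/eqP/eqP => [-> //|]; case: x; case: y. Qed.

Lemma big_sym (R : nmodType) (F : sym -> R) :
  \sum_x F x = F S0 + F S1 + F S2 + F Sstar.
Proof.
rewrite (perm_big [:: S0; S1; S2; Sstar]) /=; last first.
  by apply: uniq_perm => [||[]];
    rewrite ?index_enum_uniq ?mem_index_enum //= !inE !sym_eqE.
by rewrite !big_cons big_nil addr0 !addrA.
Qed.

Lemma count_letters (s : seq sym) :
  (count_mem S0 s + count_mem S1 s + count_mem S2 s + count_mem Sstar s)%N = size s.
Proof. by elim: s => //= x s <-; case: x; rewrite !sym_eqE /=; lia. Qed.

Lemma starfree_of_counts (s : seq sym) :
  (count_mem S0 s + count_mem S1 s + count_mem S2 s)%N = size s -> Sstar \notin s.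
Proof. by move=> counts_s; apply/count_memPn; have := count_letters s; lia. Qed.

Lemma big_tuple_rcons (T : finType) (R : nmodType) n (F : n.+1.-tuple T -> R) :
  \sum_(w : n.+1.-tuple T) F w = \sum_(t : n.-tuple T) \sum_(x : T) F [tuple of rcons t x].
Proof.
have split_lastK (w : n.+1.-tuple T) :
    rcons (belast (thead w) (behead w)) (last (thead w) (behead w)) = w.
  by rewrite -lastI [in RHS](tuple_eta w).
rewrite pair_bigA (reindex (fun p : n.-tuple T * T => [tuple of rcons p.1 p.2])) //=.
exists (fun w => ([tuple of belast (thead w) (behead w)], last (thead w) (behead w))).
  move=> [t x] _; have := split_lastK [tuple of rcons t x].
  by move/rcons_inj => [Et ->]; congr pair; apply: val_inj.
by move=> w _; apply: val_inj; rewrite /= split_lastK.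
Qed.

Section Probability.
Variables (R : nzRingType) (u1 u2 q : R).

Definition letter_weight (c0 c1 : nat) (e : sym) : R :=
  match e with
  | S0 => 1 - q ^+ c0 * (u1 + u2)
  | S1 => q ^+ c0 * u1
  | S2 => q ^+ (c0 + c1) * u2
  | Sstar => q ^+ c0 * u2 * (1 - q ^+ c1)
  end.

Lemma fstep_starfree (t : seq sym) e : Sstar \notin t ->
  fstep u1 u2 q t e = letter_weight (count_mem S0 t) (count_mem S1 t) e.
Proof.
move=> t_starfree; rewrite /fstep.
suff -> : (t != [::]) && (last S0 t == Sstar) = false by [].
case: (lastP t) t_starfree => [//|s y].
rewrite last_rcons mem_rcons in_cons negb_or eq_sym => /andP[/negbTE -> _].
by rewrite andbF.
Qed.

Lemma pw_rcons n (t : n.-tuple sym) x :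
  pw u1 u2 q [tuple of rcons t x] = pw u1 u2 q t * fstep u1 u2 q t x.
Proof.
rewrite /pw big_ord_recr; congr (_ * _).
  apply: eq_bigr => i _; rewrite !(tnth_nth S0) /= -cats1 nth_cat size_tuple ltn_ord.
  by rewrite takel_cat // size_tuple ltnW.
rewrite (tnth_nth S0) /= -cats1 take_size_cat ?size_tuple //.
by rewrite nth_cat size_tuple ltnn subnn.
Qed.

Definition starfree_counts (i0 i1 i2 : nat) (s : seq sym) : bool :=
  [&& Sstar \notin s, count_mem S0 s == i0, count_mem S1 s == i1 & count_mem S2 s == i2].

Definition probA (n i0 i1 i2 : nat) : R :=
  \sum_(w : n.-tuple sym | starfree_counts i0 i1 i2 w) pw u1 u2 q w.

Lemma starfree_counts_rcons (t : seq sym) x i0 i1 i2 :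
  starfree_counts i0 i1 i2 (rcons t x) =
  match x with
  | S0 => if i0 is k.+1 then starfree_counts k i1 i2 t else false
  | S1 => if i1 is k.+1 then starfree_counts i0 k i2 t else false
  | S2 => if i2 is k.+1 then starfree_counts i0 i1 k t else false
  | Sstar => false
  end.
Proof.
rewrite /starfree_counts mem_rcons -!cats1 !count_cat in_cons.
by case: x; [case: i0 | case: i1 | case: i2 |] => *;
  rewrite /= !sym_eqE /= ?addn0 ?addn1 ?eqSS /= ?andbF.
Qed.

Lemma probA_mul_fstep n i0 i1 i2 x c :
  (forall t, starfree_counts i0 i1 i2 t -> fstep u1 u2 q t x = c) ->
  \sum_(t : n.-tuple sym | starfree_counts i0 i1 i2 t)
     pw u1 u2 q t * fstep u1 u2 q t x = probA n i0 i1 i2 * c.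
Proof. by move=> fstep_c; rewrite /probA big_distrl; apply: eq_bigr => t /fstep_c ->. Qed.

Lemma probA_rec n i0 i1 i2 :
  probA n.+1 i0 i1 i2 =
  (if i0 is k.+1 then probA n k i1 i2 * (1 - q ^+ k * (u1 + u2)) else 0) +
  (if i1 is k.+1 then probA n i0 k i2 * (q ^+ i0 * u1) else 0) +
  (if i2 is k.+1 then probA n i0 i1 k * (q ^+ (i0 + i1) * u2) else 0).
Proof.
rewrite {1}/probA big_mkcond big_tuple_rcons.
under eq_bigr do under eq_bigr do rewrite starfree_counts_rcons pw_rcons.
rewrite exchange_big big_sym /= big1_eq addr0.
by congr (_ + _ + _); [case: i0 => [|k] | case: i1 => [|k] | case: i2 => [|k]];
  rewrite /= ?big1_eq // -big_mkcond; apply: probA_mul_fstep;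
  move=> t /and4P[t_starfree /eqP c0 /eqP c1 _]; rewrite fstep_starfree //= ?c0 ?c1.
Qed.
End Probability.

Lemma qpochS (R : comNzRingType) (x q : R) k :
  qpoch x q k.+1 = qpoch x q k * (1 - q ^+ k * x).
Proof. by rewrite /qpoch big_ord_recr. Qed.

Section ClosedForm.
Variables (F : fieldType) (u1 u2 q : F).
Hypothesis q_not_root1 : forall k, q ^+ k.+1 != 1.

Lemma qpoch_qq_neq0 n : qpoch q q n != 0.
Proof. by apply/prodf_neq0 => k _; rewrite subr_eq0 eq_sym -exprSr. Qed.

Lemma qmultinomK n i0 i1 i2 :
  qmultinom q n i0 i1 i2 * (qpoch q q i0 * qpoch q q i1 * qpoch q q i2) = qpoch q q n.
Proof. by rewrite /qmultinom mulfVK // !mulf_neq0 // qpoch_qq_neq0. Qed.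

Lemma qmultinom_rec n i0 i1 i2 : (i0 + i1 + i2)%N = n.+1 ->
  qmultinom q n.+1 i0 i1 i2 =
  (if i0 is k.+1 then qmultinom q n k i1 i2 else 0) +
  (if i1 is k.+1 then q ^+ i0 * qmultinom q n i0 k i2 else 0) +
  (if i2 is k.+1 then q ^+ (i0 + i1) * qmultinom q n i0 i1 k else 0).
Proof.
move=> sum_i; pose D j0 j1 j2 := qpoch q q j0 * qpoch q q j1 * qpoch q q j2.
have term0 : (if i0 is k.+1 then qmultinom q n k i1 i2 else 0) * D i0 i1 i2 =
    qpoch q q n * (1 - q ^+ i0).
  rewrite /D; case: i0 {sum_i} => [|k]; first by rewrite mul0r subrr mulr0.
  by rewrite qpochS -exprSr -(qmultinomK n k i1 i2); ring.
have term1 :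
    (if i1 is k.+1 then q ^+ i0 * qmultinom q n i0 k i2 else 0) * D i0 i1 i2 =
    qpoch q q n * (q ^+ i0 * (1 - q ^+ i1)).
  rewrite /D; case: i1 {sum_i term0} => [|k]; first by rewrite mul0r subrr !mulr0.
  by rewrite qpochS -exprSr -(qmultinomK n i0 k i2); ring.
have term2 :
    (if i2 is k.+1 then q ^+ (i0 + i1) * qmultinom q n i0 i1 k else 0) * D i0 i1 i2 =
    qpoch q q n * (q ^+ (i0 + i1) * (1 - q ^+ i2)).
  rewrite /D; case: i2 {sum_i term0 term1} => [|k]; first by rewrite mul0r subrr !mulr0.
  by rewrite qpochS -exprSr -(qmultinomK n i0 i1 k); ring.
have D_neq0 : D i0 i1 i2 != 0 by rewrite !mulf_neq0 // qpoch_qq_neq0.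
apply: (mulIf D_neq0); rewrite qmultinomK !mulrDl term0 term1 term2.
by rewrite qpochS -exprSr -sum_i !exprD; ring.
Qed.

Lemma probA_closed n i0 i1 i2 : (i0 + i1 + i2)%N = n ->
  probA u1 u2 q n i0 i1 i2 =
  u1 ^+ i1 * u2 ^+ i2 * qpoch (u1 + u2) q i0 * qmultinom q n i0 i1 i2.
Proof.
elim: n i0 i1 i2 => [|n IH] i0 i1 i2 sum_i.
  case: i0 i1 i2 sum_i => [|//] [|//] [|//] _.
  rewrite /probA (big_pred1 [tuple]) => [|w]; last by rewrite tuple0.
  by rewrite /pw /qmultinom /qpoch !big_ord0 !expr0 !mul1r invr1.
rewrite probA_rec qmultinom_rec // !mulrDr.
congr (_ + _ + _).
- case: i0 sum_i => [|k] sum_i; first by rewrite mulr0.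
  by rewrite qpochS IH; [ring | lia].
- case: i1 sum_i => [|k] sum_i; first by rewrite mulr0.
  by rewrite exprS IH; [ring | lia].
- case: i2 sum_i => [|k] sum_i; first by rewrite mulr0.
  by rewrite exprS IH; [ring | lia].
Qed.

End ClosedForm.

Lemma inA_starfree_counts n (w : n.-tuple sym) i0 i1 i2 : (i0 + i1 + i2)%N = n ->
  inA i0 i1 i2 w = starfree_counts i0 i1 i2 w.
Proof.
move=> sum_i; rewrite /inA /starfree_counts.
case/boolP: [&& count_mem S0 w == i0, count_mem S1 w == i1 & count_mem S2 w == i2];
  last by rewrite !andbF.
move=> /and3P[/eqP c0 /eqP c1 /eqP c2]; rewrite !andbT.
have w_starfree : Sstar \notin w.
  by apply: starfree_of_counts; rewrite c0 c1 c2 size_tuple.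
rewrite w_starfree; apply/forallP => k; apply/forallP => l.
by rewrite (negbTE (memPn w_starfree _ (mem_tnth k w))).
Qed.

Theorem theorem3p1 (R : realFieldType) (u1 u2 q : R) (n i0 i1 i2 : nat) :
  0 < u1 -> 0 < u2 -> u1 + u2 < 1 -> 0 < q -> q < 1 -> (0 < n)%N ->
  (i0 + i1 + i2)%N = n ->
  \sum_(w : n.-tuple sym | inA i0 i1 i2 w) pw u1 u2 q w =
  u1 ^+ i1 * u2 ^+ i2 * qpoch (u1 + u2) q i0 * qmultinom q n i0 i1 i2.
Proof.
move=> _ _ _ q_gt0 q_lt1 _ sum_i.
have q_not_root1 k : q ^+ k.+1 != 1 by rewrite lt_eqF // exprn_ilt1 // ltW.
rewrite -(probA_closed u1 u2 q_not_root1 sum_i).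
by apply: eq_bigl => w; apply: inA_starfree_counts.
Qed.
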